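(* Let $B(x)=\frac{x}{1+x^2}$, $B_0(x)=x$ and $B_j(x)=B(B_{j-1}(x))$ for $j\ge1$. For $j\ge0$, let $x_j\in\mathbb{C}$ be any root of $B_j(x)=-1$. Then $\Re(x_j)<0$. *)

From HB Require Import structures.
From mathcomp Require Import all_boot all_order all_algebra.
From mathcomp Require Export complex.
Set Implicit Arguments. Unset Strict Implicit. Unset Printing Implicit Defensive.
Import Order.TTheory GRing.Theory Num.Theory.
Local Open Scope ring_scope.

(* B(x) = x / (1 + x^2) on the complex numbers R[i] (R a real closed field;
   R[i] is algebraically closed, e.g. the usual C for R the reals). *)
Definition Bmap (R : rcfType) (x : R[i]) : R[i] := x / (1 + x ^+ 2).

Definition Biter (R : rcfType) (j : nat) (x : R[i]) : R[i] := iter j (@Bmap R) x.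

(* Since B(x) = x / (1 + x^2) has real part Re x (1 + |x|^2) / |1 + x^2|^2, the map B
   sends the closed right half-plane into itself, hence so does every B_j; as
   Re(-1) < 0, no x with Re x >= 0 can satisfy B_j(x) = -1. *)
From mathcomp Require Import all_boot all_order all_algebra.
From mathcomp Require Import complex.
From mathcomp Require Import ring.
Import Order.TTheory GRing.Theory Num.Theory.
Local Open Scope ring_scope.

Section RightHalfPlane.

Variable R : rcfType.

Lemma Re_Bmap (a b : R) :
  complex.Re (Bmap (a +i* b)%C) =
  a * (1 + a ^+ 2 + b ^+ 2) / ((1 + a ^+ 2 - b ^+ 2) ^+ 2 + (2 * a * b) ^+ 2).
Proof.
rewrite /Bmap !expr2 /= !add0r mulrN opprK !mulrA -mulrDl; congr (_ / _); ring.
Qed.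

Lemma Re_Bmap_ge0 (x : R[i]) :
  0 <= complex.Re x -> 0 <= complex.Re (Bmap x).
Proof.
case: x => a b; rewrite Re_Bmap /= => a_ge0.
by rewrite divr_ge0 ?mulr_ge0 ?addr_ge0 ?sqr_ge0.
Qed.

Lemma Re_Biter_ge0 (j : nat) (x : R[i]) :
  0 <= complex.Re x -> 0 <= complex.Re (Biter j x).
Proof.
by move=> x_ge0; elim: j => [|j IHj] //=; apply: Re_Bmap_ge0.
Qed.

End RightHalfPlane.

Theorem proposition2p7 (R : rcfType) (j : nat) (x : R[i]) :
  Biter j x = -1 -> complex.Re x < 0.
Proof.
move=> Bjx; rewrite ltNge; apply/negP => /(Re_Biter_ge0 _ j).
by rewrite Bjx /= oppr_ge0 ler10.
Qed.
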